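(* Let $(\Xi,d_\Xi)$ be a metric space, let $\{P^\nu\}_{\nu\in\mathbb{N}}$ be probabilities on $(\Xi,\mathcal{B}(\Xi))$ converging weakly to a probability $P$, and let $\{h^\nu\}_{\nu\in\mathbb{N}}$ be measurable $\overline{\mathbb{R}}$-valued functions on $\Xi$ such that $$\liminf_{K\to+\infty}\ \liminf_{\nu\to+\infty}\mathbb{E}^{P^\nu}\big[h^\nu(\xi)\,\mathbb{1}\{\xi:h^\nu(\xi)\le -K\}\big]=0.$$ Then either $\liminf_{\nu\to+\infty}\mathbb{E}^{P^\nu}[h^\nu(\xi)]=+\infty$ or $$\mathbb{E}^{P}\Big[\Big(\liminf_{(\nu,\zeta)\to(+\infty,\xi)}h^\nu(\zeta)\Big)_+\Big]<+\infty.$$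
   Context: $\overline{\mathbb{R}}=\mathbb{R}\cup\{-\infty,+\infty\}$; $a_+=\max\{a,0\}$, $a_-=-\min\{a,0\}$. Weak convergence means $\int\varphi\,dP^\nu\to\int\varphi\,dP$ for all bounded continuous $\varphi$. For a probability $\mu$ and measurable $\overline{\mathbb{R}}$-valued $g$, $\mathbb{E}^\mu[g]:=\int g_+\,d\mu-\int g_-\,d\mu$ with conventions $+\infty-\alpha=+\infty$ for all $\alpha\in\overline{\mathbb{R}}$ and $\beta-(+\infty)=-\infty$ for $\beta\in\mathbb{R}$. $\mathbb{1}\{B\}$ is the indicator of $B$. $\liminf_{(\nu,\zeta)\to(+\infty,\xi)}h^\nu(\zeta):=\lim_{\delta\downarrow0}\lim_{N\to\infty}\inf\{h^\nu(\zeta):\nu\ge N,\ d_\Xi(\zeta,\xi)<\delta\}$. *)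

From HB Require Import structures.
From mathcomp Require Import all_boot all_order all_algebra.
From mathcomp Require Import all_classical all_reals all_analysis measurable_realfun.
Set Implicit Arguments. Unset Strict Implicit. Unset Printing Implicit Defensive.
Import Order.TTheory GRing.Theory Num.Theory.
Local Open Scope classical_set_scope.
Local Open Scope ring_scope.

Section Defs.
Context {R : realType} {T : pointedType}.

Definition is_metric (d : T -> T -> R) : Prop :=
  [/\ forall x y, 0 <= d x y,
      forall x y, d x y = 0 <-> x = y,
      forall x y, d x y = d y x &
      forall x y z, d x z <= d x y + d y z].

Definition dopen (d : T -> T -> R) : set (set T) :=
  [set A | forall x, A x -> exists2 e : R, 0 < e & forall y, d x y < e -> A y].

Definition dcontinuous (d : T -> T -> R) (f : T -> R) : Prop :=
  forall x (e : R), 0 < e ->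
    exists2 del : R, 0 < del & forall y, d x y < del -> `|f x - f y| < e.

Definition bounded_fun (f : T -> R) : Prop := exists M : R, forall x, `|f x| <= M.
End Defs.

Notation borel d := (g_sigma_algebraType (dopen d)).

Section Defs2.
Context {R : realType} {T : pointedType} (d : T -> T -> R).
Local Open Scope ereal_scope.

Definition weak_cvg (Pn : nat -> probability (borel d) R)
    (P : probability (borel d) R) : Prop :=
  forall phi : borel d -> R, dcontinuous d phi -> bounded_fun phi ->
    (fun n => \int[Pn n]_x (phi x)%:E) @ \oo --> \int[P]_x (phi x)%:E.

(* E^mu[g] := int g_+ - int g_-, with +oo - a = +oo for every a *)
Definition Eexp (mu : probability (borel d) R) (g : borel d -> \bar R) : \bar R :=
  let a := \int[mu]_x g^\+ x in
  let b := \int[mu]_x g^\- x in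
  if a == +oo then +oo else a - b.

Definition liminf_pinfty (f : R -> \bar R) : \bar R :=
  ereal_sup [set ereal_inf [set f K | K in [set K | (M <= K)%R]] | M in [set: R]].

(* epi-liminf: liminf_{(nu,zeta) -> (+oo,xi)} h^nu(zeta)
   = lim_{delta \downarrow 0} lim_{N -> oo} inf {h^nu zeta : nu >= N, d zeta xi < delta};
   both limits are monotone limits, written as suprema. *)
Definition epi_liminf (h : nat -> T -> \bar R) (xi : T) : \bar R :=
  ereal_sup [set
    ereal_sup [set ereal_inf [set v | exists nu : nat, exists zeta : T,
                         [/\ (N <= nu)%N, (d zeta xi < delta)%R & h nu zeta = v]]
              | N in [set: nat]]
  | delta in [set delta : R | (0 < delta)%R]].
End Defs2.

From Pilot Require Import Defs.
From HB Require Import structures.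
From mathcomp Require Import all_boot all_order all_algebra.
From mathcomp Require Import all_classical all_reals all_analysis measurable_realfun.
From mathcomp Require Import lra.
Set Implicit Arguments. Unset Strict Implicit. Unset Printing Implicit Defensive.
Import Order.TTheory GRing.Theory Num.Theory.
Local Open Scope classical_set_scope.
Local Open Scope ring_scope.
Local Open Scope ereal_scope.

(* If liminf_nu E^{P^nu}[h^nu] < +oo, the tail hypothesis bounds the integrals
   of the negative parts (h^nu)^- for large nu, hence the integrals of the
   positive parts (h^nu)^+ stay below some D along a subsequence.  The
   Pasch-Hausdorff envelopes
     lip_minorant m x = inf_{k >= m, y} min((h^k)^+ y, m) + (m+1) d(x, y)
   are bounded, Lipschitz, below (h^k)^+ for k >= m, and increase with m to a
   limit dominating the positive part of the epi-liminf.  Weak convergence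
   gives E^P[lip_minorant m] <= D for every m, and monotone convergence carries
   the bound over to the positive part of the epi-liminf. *)

Section ExtendedRealLimits.
Context {R : realType}.

Lemma lee_real_approx (a b : \bar R) :
  (forall t : R, t%:E < a -> t%:E <= b) -> a <= b.
Proof.
move=> ab; rewrite leNgt; apply/negP => ba.
case: a b ab ba => [r| |] [s| |] //= ab; rewrite ?ltey ?ltNye //.
- by rewrite lte_fin => sr; have := ab ((s + r) / 2)%R; rewrite !lte_fin lee_fin; lra.
- by move=> _; have := ab (r - 1)%R; rewrite lte_fin => /(_ ltac:(lra)).
- by move=> _; have := ab (s + 1)%R (ltey _); rewrite lee_fin; lra.
- by move=> _; have := ab 0%R (ltey _).
Qed.

Lemma limn_einfE (u : (\bar R)^nat) : limn_einf u = ereal_sup (range (einfs u)).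
Proof. by rewrite limn_einf_lim; apply/cvg_lim => //; exact: cvg_einfs_sup. Qed.

Lemma limn_einf_gt (u : (\bar R)^nat) a :
  a < limn_einf u -> exists N, forall n, (N <= n)%N -> a < u n.
Proof.
rewrite limn_einfE => /ereal_sup_gt[_ [N _ <-] aN].
by exists N => n Nn; apply: lt_le_trans aN _; apply: ereal_inf_lbound; exists n.
Qed.

Lemma limn_einf_lt (u : (\bar R)^nat) a :
  limn_einf u < a -> forall N, exists2 n, (N <= n)%N & u n < a.
Proof.
move=> ua N; have : einfs u N < a.
  by apply: le_lt_trans ua; rewrite limn_einfE; apply: ereal_sup_ubound; exists N.
by case/ereal_inf_lt => _ [n Nn <-]; exists n.
Qed.

Lemma limn_einf_le_frequently (u : (\bar R)^nat) b :
  (forall N, exists2 n, (N <= n)%N & u n <= b) -> limn_einf u <= b.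
Proof.
move=> ub; rewrite limn_einfE; apply: ge_ereal_sup => _ [N _ <-].
by have [n Nn unb] := ub N; apply: le_trans unb; apply: ereal_inf_lbound; exists n.
Qed.

Lemma liminf_pinfty_gt (f : R -> \bar R) a :
  a < liminf_pinfty f -> exists M : R, forall K, (M <= K)%R -> a < f K.
Proof.
case/ereal_sup_gt => _ [M _ <-] aM.
by exists M => K MK; apply: lt_le_trans aM _; apply: ereal_inf_lbound; exists K.
Qed.

End ExtendedRealLimits.

(* No measurability is required, since the epi-liminf is never shown measurable. *)
Lemma ge0_le_integralT d' (X : measurableType d') (R : realType) (mu : measure X R)
    (f g : X -> \bar R) :
  (forall x, 0 <= f x) -> (forall x, f x <= g x) ->
  \int[mu]_x f x <= \int[mu]_x g x.
Proof.
move=> f0 fg; have g0 x : 0 <= g x by exact: le_trans (f0 x) (fg x).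
rewrite !ge0_integralTE //; apply: ereal_sup_le => _ [s sf <-].
by exists s => //= x; exact: le_trans (sf x) (fg x).
Qed.

Section Expectation.
Context {R : realType} {T : pointedType} {d : T -> T -> R}.
Variable mu : probability (borel d) R.

Lemma Eexp_ge0 (g : borel d -> \bar R) :
  (forall x, 0 <= g x) -> Eexp mu g = \int[mu]_x g x.
Proof.
move=> g0; rewrite /Eexp.
have -> : g^\+ = g by apply/funext => x; rewrite funeposE; exact/max_idPl.
have -> : g^\- = cst 0.
  by apply/funext => x; rewrite funenegE; apply/max_idPr; rewrite leeNl oppe0.
by rewrite integral0 sube0; case: eqP.
Qed.

Lemma Eexp_le0 (g : borel d -> \bar R) :
  (forall x, g x <= 0) -> Eexp mu g = - \int[mu]_x g^\- x.
Proof.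
move=> g0; rewrite /Eexp.
have -> : g^\+ = cst 0 by apply/funext => x; rewrite funeposE; exact/max_idPr.
by rewrite integral0 sub0e.
Qed.

Lemma integral_funepos_le_Eexp (g : borel d -> \bar R) (B C : R) :
  \int[mu]_x g^\- x <= C%:E -> Eexp mu g < B%:E -> \int[mu]_x g^\+ x <= (B + C)%:E.
Proof.
move=> negC; rewrite /Eexp; case: ifPn => [_|_]; first by rewrite ltNge leey.
have neg_fin : \int[mu]_x g^\- x \is a fin_num.
  by rewrite ge0_fin_numE ?(le_lt_trans negC) ?ltey // integral_ge0.
by rewrite lteBlDr // EFinD => /ltW/le_trans; apply; rewrite leeD2l.
Qed.

Definition lower_tail (g : T -> \bar R) (K : R) (x : T) : \bar R :=
  g x * (\1_[set y | (g y <= (- K)%:E)%E] x)%:E.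

Lemma lower_tail_le0 (g : T -> \bar R) (K : R) x : (0 <= K)%R -> lower_tail g K x <= 0.
Proof.
move=> K0; rewrite /lower_tail indicE.
case: (boolP (x \in _)) => [|_]; last by rewrite mule0.
by rewrite inE /= mule1 => /le_trans; apply; rewrite lee_fin oppr_le0.
Qed.

Lemma funeneg_le_lower_tail (g : T -> \bar R) (K : R) x :
  (0 <= K)%R -> g^\- x <= K%:E + (lower_tail g K)^\- x.
Proof.
move=> K0; rewrite /lower_tail !funenegE indicE.
case: (boolP (x \in _)) => [_|]; first by rewrite mule1 leeDr ?lee_fin.
rewrite notin_setE /= => /negP; rewrite -ltNge mule0 oppe0 maxxx adde0.
by rewrite ge_max lee_fin K0 andbT leeNl => /ltW.
Qed.

Lemma integral_funeneg_le_lower_tail (g : borel d -> \bar R) (K : R) :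
  (0 <= K)%R -> measurable_fun setT g ->
  \int[mu]_x g^\- x <= K%:E - Eexp mu (lower_tail g K).
Proof.
move=> K0 mg; rewrite Eexp_le0; last by move=> x; exact: lower_tail_le0.
have mtail : measurable_fun [set: borel d] (lower_tail g K).
  apply: emeasurable_funM => //; apply/measurable_EFinP; apply: measurable_indic.
  by rewrite -[X in measurable X]setTI; exact: emeasurable_fun_infty_c.
rewrite oppeK -[K%:E]mule1 -(probability_setT mu) -integral_cst //.
rewrite -ge0_integralD //; last exact: measurable_funeneg.
apply: ge0_le_integral => //; first exact: measurable_funeneg.
- by apply: emeasurable_funD => //; exact: measurable_funeneg.
- by move=> x _; exact: funeneg_le_lower_tail.
Qed.

End Expectation.

Section IntegralBounds.
Context {R : realType} {T : pointedType} {d : T -> T -> R}.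
Variables (mu : nat -> probability (borel d) R) (g : nat -> borel d -> \bar R).

Lemma eventually_integral_funeneg_le (a : R) :
  (forall n, measurable_fun setT (g n)) ->
  a%:E < liminf_pinfty (fun K => limn_einf (fun n => Eexp (mu n) (lower_tail (g n) K))) ->
  exists C : R, exists N, forall n, (N <= n)%N -> \int[mu n]_x (g n)^\- x <= C%:E.
Proof.
move=> mg /liminf_pinfty_gt[M aM].
pose K := Num.max M 0%R.
have K0 : (0 <= K)%R by rewrite le_max lexx orbT.
have [N aN] : exists N, forall n, (N <= n)%N -> a%:E < Eexp (mu n) (lower_tail (g n) K).
  by apply: limn_einf_gt; apply: aM; rewrite le_max lexx.
exists (K - a)%R, N => n Nn.
apply: le_trans (integral_funeneg_le_lower_tail (mu n) K0 (mg n)) _.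
by rewrite EFinB leeD2l // leeN2 ltW // aN.
Qed.

Lemma frequently_integral_funepos_le (C : R) N0 :
  (forall n, (N0 <= n)%N -> \int[mu n]_x (g n)^\- x <= C%:E) ->
  limn_einf (fun n => Eexp (mu n) (g n)) != +oo ->
  exists D : R, forall N, exists2 n, (N <= n)%N & \int[mu n]_x (g n)^\+ x <= D%:E.
Proof.
move=> negC liminf_fin.
have [B liminfB] : exists B : R, limn_einf (fun n => Eexp (mu n) (g n)) < B%:E.
  move: liminf_fin; case: limn_einf => [r _|//|_]; last by exists 0%R; exact: ltNyr.
  by exists (r + 1)%R; rewrite lte_fin ltrDl.
exists (B + C)%R => N; have [n Nn EnB] := limn_einf_lt liminfB (maxn N N0).
exists n; first exact: leq_trans (leq_maxl _ _) Nn.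
by apply: integral_funepos_le_Eexp EnB; apply: negC; exact: leq_trans (leq_maxr _ _) Nn.
Qed.

End IntegralBounds.

Lemma dcontinuous_measurable {R : realType} {T : pointedType} (d : T -> T -> R)
    (f : borel d -> R) :
  dcontinuous d f -> measurable_fun setT f.
Proof.
move=> cf; apply: (measurability _ (RGenOInfty.measurableE R)) => //.
move=> /= _ [_ [r ->] <-]; apply: sub_sigma_algebra => x [_ /=].
rewrite in_itv /= andbT => rfx.
have [del del0 near_fx] := cf x (f x - r)%R ltac:(by rewrite subr_gt0).
exists del => // y dxy; split => //=; rewrite in_itv /= andbT.
by have := near_fx y dxy; rewrite ltr_norml => /andP[_ ?]; lra.
Qed.

Lemma weak_cvg_integral_le {R : realType} {T : pointedType} (d : T -> T -> R)
    (Pn : nat -> probability (borel d) R) (P : probability (borel d) R)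
    (phi : borel d -> R) (b : \bar R) :
  weak_cvg Pn P -> dcontinuous d phi -> Defs.bounded_fun phi ->
  (forall N, exists2 n, (N <= n)%N & \int[Pn n]_x (phi x)%:E <= b) ->
  \int[P]_x (phi x)%:E <= b.
Proof.
move=> PnP cphi bphi freq_le; have [<- _] := cvg_limn_einf_sup (PnP phi cphi bphi).
exact: limn_einf_le_frequently.
Qed.

Section LipschitzMinorant.
Context {R : realType} {T : pointedType} (d : T -> T -> R).
Hypotheses (d_ge0 : forall x y, (0 <= d x y)%R) (d_refl : forall x, d x x = 0%R).
Hypotheses (d_sym : forall x y, d x y = d y x)
  (d_tri : forall x y z, (d x z <= d x y + d y z)%R).
Variable h : nat -> T -> \bar R.

Definition lip_minorant (m : nat) (x : T) : \bar R :=
  ereal_inf [set v | exists k y, (m <= k)%N /\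
     v = Order.min ((h k)^\+ y) m%:R%:E + (m.+1%:R * d x y)%:E].

Lemma lip_minorant_ge0 m x : 0 <= lip_minorant m x.
Proof.
apply: le_ereal_inf_tmp => _ [k [y [_ ->]]].
apply: adde_ge0; first by rewrite le_min funepos_ge0 lee_fin ler0n.
by rewrite lee_fin mulr_ge0.
Qed.

Lemma lip_minorant_le_funepos m k x : (m <= k)%N -> lip_minorant m x <= (h k)^\+ x.
Proof.
move=> mk; apply: ge_ereal_inf; eexists; first by exists k, x; split.
by rewrite d_refl mulr0 adde0 ge_min lexx.
Qed.

Lemma lip_minorant_le_index m x : lip_minorant m x <= m%:R%:E.
Proof.
apply: ge_ereal_inf; eexists; first by exists m, x; split.
by rewrite d_refl mulr0 adde0 ge_min lexx orbT.
Qed.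

Lemma lip_minorant_fin_num m x : lip_minorant m x \is a fin_num.
Proof.
rewrite ge0_fin_numE ?lip_minorant_ge0 //.
exact: le_lt_trans (lip_minorant_le_index _ _) (ltey _).
Qed.

Lemma lip_minorant_lipschitz m x y :
  lip_minorant m x <= lip_minorant m y + (m.+1%:R * d x y)%:E.
Proof.
rewrite -leeBlDr //; apply: le_ereal_inf_tmp => _ [k [z [mk ->]]].
rewrite leeBlDr //; apply: ge_ereal_inf; eexists; first by exists k, z; split.
by rewrite -addeA -EFinD leeD2l // lee_fin -mulrDr ler_wpM2l // addrC d_tri.
Qed.

Lemma lip_minorant_nondecreasing x : nondecreasing_seq (lip_minorant ^~ x).
Proof.
move=> m m' mm'; apply: le_ereal_inf_tmp => _ [k [y [mk ->]]].
apply: ge_ereal_inf; eexists; first by exists k, y; split => //; exact: leq_trans mk.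
by rewrite leeD ?le_min2 ?lee_fin ?ler_wpM2r ?ler_nat.
Qed.

Lemma epi_liminf_le_sup_lip_minorant x :
  epi_liminf d h x <= ereal_sup (range (lip_minorant ^~ x)).
Proof.
have sup_ge0 : 0 <= ereal_sup (range (lip_minorant ^~ x)).
  by apply: le_trans (lip_minorant_ge0 0 x) _; apply: ereal_sup_ubound; exists 0%N.
apply: ge_ereal_sup => _ [del del0 <-]; apply: ge_ereal_sup => _ [N _ <-].
apply: lee_real_approx => t t_lt_inf.
have [t_le0|t_gt0] := leP t 0%R; first by apply: le_trans sup_ge0; rewrite lee_fin.
near \oo => m.
have Nm : (N <= m)%N by near: m; exact: nbhs_infty_ge.
have tm : (t < m%:R)%R by near: m; exact: nbhs_infty_gtr.
have tmdel : (t < m%:R * del)%R.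
  by near: m; apply: filterS (nbhs_infty_gtr (t / del)) => m; rewrite ltr_pdivrMr.
apply: le_trans (ereal_sup_ubound _); last by exists m.
apply: le_ereal_inf_tmp => _ [k [y [mk ->]]].
have [dyx|dyx] := ltP (d y x) del.
- have th : t%:E < h k y.
    apply: lt_le_trans t_lt_inf _; apply: ereal_inf_lbound.
    by exists k, y; split => //; exact: leq_trans mk.
  rewrite -[t%:E]adde0 leeD ?lee_fin ?mulr_ge0 // le_min lee_fin (ltW tm) andbT.
  by rewrite funeposE le_max (ltW th).
- rewrite -[t%:E]add0e leeD ?le_min ?funepos_ge0 ?lee_fin ?ler0n //.
  by apply: le_trans (ltW tmdel) _; rewrite d_sym ler_pM ?ler_nat ?(ltW del0).
Unshelve. all: by end_near.
Qed.

Lemma lip_minorant_dcontinuous m : dcontinuous d (fun x => fine (lip_minorant m x)).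
Proof.
move=> x e e0; exists (e / m.+1%:R)%R => [|y dxy]; first by rewrite divr_gt0.
have := lip_minorant_lipschitz m x y; have := lip_minorant_lipschitz m y x.
rewrite -(fineK (lip_minorant_fin_num m x)) -(fineK (lip_minorant_fin_num m y)).
rewrite d_sym -!EFinD !lee_fin => ? ?.
have : (m.+1%:R * d x y < e)%R by rewrite mulrC -ltr_pdivlMr.
by rewrite ltr_norml => ?; apply/andP; split; lra.
Qed.

Lemma lip_minorant_bounded m : Defs.bounded_fun (fun x => fine (lip_minorant m x)).
Proof.
exists m%:R => x; rewrite ger0_norm ?fine_ge0 ?lip_minorant_ge0 //.
by rewrite -lee_fin fineK ?lip_minorant_fin_num ?lip_minorant_le_index.
Qed.

Lemma lip_minorant_measurable m : measurable_fun [set: borel d] (lip_minorant m).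
Proof.
have -> : lip_minorant m = (fun x => (fine (lip_minorant m x))%:E).
  by apply/funext => x; rewrite fineK ?lip_minorant_fin_num.
apply/measurable_EFinP; apply: dcontinuous_measurable.
exact: lip_minorant_dcontinuous.
Qed.

Lemma integral_epi_liminf_funepos_le (Pn : nat -> probability (borel d) R)
    (P : probability (borel d) R) (b : \bar R) :
  weak_cvg Pn P ->
  (forall N, exists2 n, (N <= n)%N & \int[Pn n]_x (h n)^\+ x <= b) ->
  \int[P]_x (epi_liminf d h)^\+ x <= b.
Proof.
move=> PnP freq_le.
have fineK_lip m : (fun x => (fine (lip_minorant m x))%:E) = lip_minorant m.
  by apply/funext => x; rewrite fineK ?lip_minorant_fin_num.
have int_lip_le m : \int[P]_x lip_minorant m x <= b.
  rewrite -fineK_lip; apply: (weak_cvg_integral_le PnP (lip_minorant_dcontinuous m)).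
    exact: lip_minorant_bounded.
  move=> N; have [n Nn nb] := freq_le (maxn N m).
  exists n; first exact: leq_trans (leq_maxl _ _) Nn.
  rewrite fineK_lip; apply: le_trans nb; apply: ge0_le_integralT => x.
    exact: lip_minorant_ge0.
  by apply: lip_minorant_le_funepos; exact: leq_trans (leq_maxr _ _) Nn.
apply: (@le_trans _ _ (\int[P]_x limn (lip_minorant ^~ x))).
  apply: ge0_le_integralT => x; first exact: funepos_ge0.
  rewrite (cvg_lim _ (ereal_nondecreasing_cvgn (lip_minorant_nondecreasing x))) //.
  rewrite funeposE ge_max epi_liminf_le_sup_lip_minorant /=.
  by apply: le_trans (lip_minorant_ge0 0 x) _; apply: ereal_sup_ubound; exists 0%N.
rewrite (monotone_convergence P measurableT lip_minorant_measurable
  (fun m x _ => lip_minorant_ge0 m x) (fun x _ => lip_minorant_nondecreasing x)).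
apply: lime_le; last exact: nearW.
apply: ereal_nondecreasing_is_cvgn => m m' mm'.
apply: ge0_le_integralT => x; first exact: lip_minorant_ge0.
exact: lip_minorant_nondecreasing.
Qed.

End LipschitzMinorant.

Theorem lemma3p5 (R : realType) (T : pointedType) (d : T -> T -> R)
  (Pn : nat -> probability (borel d) R) (P : probability (borel d) R)
  (h : nat -> borel d -> \bar R) :
  is_metric d ->
  weak_cvg Pn P ->
  (forall n, measurable_fun [set: borel d] (h n)) ->
  liminf_pinfty (fun K : R => limn_einf (fun n =>
     Eexp (Pn n) (fun x => h n x * (\1_[set y | (h n y <= (- K)%:E)%E] x)%:E))) = 0 ->
  limn_einf (fun n => Eexp (Pn n) (h n)) = +oo \/
  Eexp P (epi_liminf d h)^\+ < +oo.
Proof.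
move=> [d_ge0 d_eq0 d_sym d_tri] PnP mh tail0.
have d_refl x : d x x = 0%R by apply/d_eq0.
have tail_gt : (-1)%:E < liminf_pinfty (fun K =>
    limn_einf (fun n => Eexp (Pn n) (lower_tail (h n) K))).
  by rewrite /lower_tail tail0 lte_fin ltrN10.
have [C [N0 negC]] := eventually_integral_funeneg_le mh tail_gt.
have [->|liminf_fin] := eqVneq (limn_einf (fun n => Eexp (Pn n) (h n))) +oo.
  by left.
right.
have [D posD] := frequently_integral_funepos_le negC liminf_fin.
rewrite Eexp_ge0; last exact: funepos_ge0.
apply: le_lt_trans _ (ltey D%:E).
exact: (integral_epi_liminf_funepos_le d_ge0 d_refl d_sym d_tri (h := h) PnP posD).
Qed.
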